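(* Let $\varphi$ be a forecasting system and $\mathscr S$ a countable set of selection processes. Then the event $\{\omega\in\Omega:\omega\text{ is }\mathscr S\text{-random for }\varphi\}$ is almost sure for $\varphi$.
   Context: $\mathbb N_0=\{0,1,2,\dots\}$. $\Omega=\{0,1\}^{\mathbb N}$ is the set of paths $\omega=(\omega_1,\omega_2,\dots)$, $\omega_{1:n}=(\omega_1,\dots,\omega_n)$, $\omega_{1:0}=\square$ the empty sequence; $\mathbb S=\bigcup_{n\ge0}\{0,1\}^n$ the set of situations; $sx$ concatenation. For $r\in[0,1]$ and $f:\{0,1\}\to\mathbb R$, $E_r(f)=rf(1)+(1-r)f(0)$; for a closed interval $I\subseteq[0,1]$, $\overline E_I(f)=\max_{r\in I}E_r(f)$, $\underline E_I(f)=\min_{r\in I}E_r(f)$. A forecasting system is a map $\varphi$ from $\mathbb S$ to closed subintervals of $[0,1]$, with $\underline\varphi(s)=\min\varphi(s)$, $\overline\varphi(s)=\max\varphi(s)$. For a real process $M:\mathbb S\to\mathbb R$, $\Delta M(s)$ is $x\mapsto M(sx)-M(s)$; $M$ is a supermartingale for $\varphi$ if $\overline E_{\varphi(s)}(\Delta M(s))\le0$ for all $s$, a submartingale if $\underline E_{\varphi(s)}(\Delta M(s))\ge0$ for all $s$. For bounded $f:\Omega\to\mathbb R$, $\underline E^\varphi(f)=\sup\{M(\square): M$ submartingale for $\varphi$, $\limsup_nM(\omega_{1:n})\le f(\omega)\ \forall\omega\}$. An event $A\subseteq\Omega$ is almost sure for $\varphi$ if $\underline E^\varphi(\mathbb 1_A)=1$.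 A selection process is a map $S:\mathbb S\to\{0,1\}$. For a countable set $\mathscr S$ of selection processes, $\omega$ is $\mathscr S$-random for $\varphi$ if for every $S\in\mathscr S$ with $\lim_n\sum_{k=0}^{n-1}S(\omega_{1:k})=\infty$: $\liminf_n\frac{\sum_{k=0}^{n-1}S(\omega_{1:k})[\omega_{k+1}-\underline\varphi(\omega_{1:k})]}{\sum_{k=0}^{n-1}S(\omega_{1:k})}\ge0$ and $\limsup_n\frac{\sum_{k=0}^{n-1}S(\omega_{1:k})[\omega_{k+1}-\overline\varphi(\omega_{1:k})]}{\sum_{k=0}^{n-1}S(\omega_{1:k})}\le0$. *)

From Stdlib Require Import Reals List ClassicalEpsilon.
From Coquelicot Require Import Coquelicot.
Open Scope R_scope.

Definition sit := list bool.

(* Paths omega = (omega_1, omega_2, ...), encoded 0-indexed: omega_{k+1} = w k. *)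
Definition path := nat -> bool.

Definition prefix (w : path) (n : nat) : sit := map w (seq 0 n).

Definition b2R (b : bool) : R := if b then 1 else 0.

Record forecasting_system := {
  lo : sit -> R;
  hi : sit -> R;
  lo_ge0 : forall s, 0 <= lo s;
  lo_le_hi : forall s, lo s <= hi s;
  hi_le1 : forall s, hi s <= 1
}.

Definition E_r (r : R) (f : bool -> R) : R := r * f true + (1 - r) * f false.

Definition DeltaM (M : sit -> R) (s : sit) : bool -> R :=
  fun x => M (s ++ x :: nil) - M s.

(* Upper expectation over phi(s) is <= 0, i.e. max_{r in phi(s)} E_r(...) <= 0 *)
Definition supermartingale (phi : forecasting_system) (M : sit -> R) : Prop :=
  forall s r, lo phi s <= r <= hi phi s -> E_r r (DeltaM M s) <= 0.

(* Lower expectation over phi(s) is >= 0, i.e. min_{r in phi(s)} E_r(...) >= 0 *)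
Definition submartingale (phi : forecasting_system) (M : sit -> R) : Prop :=
  forall s r, lo phi s <= r <= hi phi s -> 0 <= E_r r (DeltaM M s).

Definition lower_exp (phi : forecasting_system) (f : path -> R) : Rbar :=
  Lub_Rbar (fun v => exists M : sit -> R,
     submartingale phi M /\
     (forall w, Rbar_le (LimSup_seq (fun n => M (prefix w n))) (Finite (f w))) /\
     v = M nil).

Definition indicator (A : path -> Prop) (w : path) : R :=
  if excluded_middle_informative (A w) then 1 else 0.

Definition almost_sure (phi : forecasting_system) (A : path -> Prop) : Prop :=
  lower_exp phi (indicator A) = Finite 1.

Definition selection_process := sit -> bool.

Fixpoint rsum (a : nat -> R) (n : nat) : R :=
  match n with O => 0 | S m => rsum a m + a m end.

Definition countable_set (P : selection_process -> Prop) : Prop :=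
  exists e : nat -> option selection_process,
    forall S, P S -> exists n, e n = Some S.

Definition S_random (P : selection_process -> Prop) (phi : forecasting_system)
    (w : path) : Prop :=
  forall S : selection_process, P S ->
    is_lim_seq (fun n => rsum (fun k => b2R (S (prefix w k))) n) p_infty ->
    Rbar_le (Finite 0)
      (LimInf_seq (fun n =>
         rsum (fun k => b2R (S (prefix w k)) * (b2R (w k) - lo phi (prefix w k))) n
         / rsum (fun k => b2R (S (prefix w k))) n)) /\
    Rbar_le
      (LimSup_seq (fun n =>
         rsum (fun k => b2R (S (prefix w k)) * (b2R (w k) - hi phi (prefix w k))) n
         / rsum (fun k => b2R (S (prefix w k))) n)) (Finite 0).

From Stdlib Require Import Reals Lra Lia List Cantor Classical ClassicalEpsilon.
From Coquelicot Require Import Coquelicot.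
Import ListNotations.
Open Scope R_scope.

(* For a selection process [sel], a stake [0 < dl <= 1/3] and a side, consider the
   gambler who, in the rounds selected by [sel], bets the fraction [dl] of his
   capital against the outcome at the lower forecast (or for it at the upper one).
   His capital is a nonnegative supermartingale starting at 1, and since
   [1 - y >= exp (- y - 2 y^2)] it is at least [exp (dl^2 * #selected)] at every
   time where the selected average deviation is beyond [3 dl]. So on a path
   violating one of the two frequency conditions some test with a small enough
   stake is unbounded. A countable convex mixture of all tests is again a
   nonnegative supermartingale starting at 1, unbounded on every non-random path;
   stopping it at level [1/eps], [1 - eps * capital] is a submartingale starting
   at [1 - eps] whose upper limit lies below the indicator of the random paths.
   Conversely no submartingale with upper limits at most 1 starts above 1: follow
   a child at which it does not decrease. *)

Fixpoint forward_rev (a : R) (step : sit -> bool -> R -> R) (l : list bool) : R :=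
  match l with
  | [] => a
  | x :: l' => step (rev l') x (forward_rev a step l')
  end.

(* Recursion on the reversed situation, so that the last outcome is peeled off first. *)
Definition forward_process (a : R) (step : sit -> bool -> R -> R) (s : sit) : R :=
  forward_rev a step (rev s).

Lemma forward_process_nil a step : forward_process a step [] = a.
Proof. reflexivity. Qed.

Lemma forward_process_snoc a step s x :
  forward_process a step (s ++ [x]) = step s x (forward_process a step s).
Proof. unfold forward_process. rewrite rev_unit. simpl. now rewrite rev_involutive. Qed.

Lemma prefix_S w n : prefix w (S n) = prefix w n ++ [w n].
Proof. unfold prefix. now rewrite seq_S, map_app. Qed.

Lemma E_r_DeltaM r M s :
  E_r r (DeltaM M s) = r * M (s ++ [true]) + (1 - r) * M (s ++ [false]) - M s.
Proof. unfold E_r, DeltaM. ring. Qed.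

Section Submartingales.
Variable phi : forecasting_system.

Definition greedy_child (M : sit -> R) (s : sit) : bool :=
  if Rle_dec (M s) (M (s ++ [true])) then true else false.

Lemma submartingale_greedy_child M s :
  submartingale phi M -> M s <= M (s ++ [greedy_child M s]).
Proof.
  intros HM. unfold greedy_child.
  destruct Rle_dec as [Ht | Ht]; [exact Ht|].
  pose proof (lo_ge0 phi s). pose proof (lo_le_hi phi s). pose proof (hi_le1 phi s).
  specialize (HM s (lo phi s) ltac:(lra)). rewrite E_r_DeltaM in HM.
  destruct (Rle_lt_or_eq_dec _ _ (lo_ge0 phi s)); nra.
Qed.

Fixpoint greedy_prefix (M : sit -> R) (n : nat) : sit :=
  match n with
  | O => []
  | S n => greedy_prefix M n ++ [greedy_child M (greedy_prefix M n)]
  end.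

Definition greedy_path (M : sit -> R) : path := fun n => greedy_child M (greedy_prefix M n).

Lemma prefix_greedy_path M n : prefix (greedy_path M) n = greedy_prefix M n.
Proof. induction n as [|n IH]; [reflexivity|]. now rewrite prefix_S, IH. Qed.

Lemma submartingale_le_greedy_path M n :
  submartingale phi M -> M [] <= M (prefix (greedy_path M) n).
Proof.
  intros HM. rewrite prefix_greedy_path.
  induction n as [|n IH]; simpl; [lra|].
  eapply Rle_trans; [exact IH | now apply submartingale_greedy_child].
Qed.

Lemma submartingale_le_limsup M (c : R) :
  submartingale phi M ->
  (forall w, Rbar_le (LimSup_seq (fun n => M (prefix w n))) c) -> M [] <= c.
Proof.
  intros HM Hc.
  assert (Hle : Rbar_le (M []) (LimSup_seq (fun n => M (prefix (greedy_path M) n)))).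
  { rewrite <- LimSup_seq_const. apply LimSup_le. exists O.
    intros n _. now apply submartingale_le_greedy_path. }
  exact (Rbar_le_trans _ _ _ Hle (Hc _)).
Qed.

Lemma submartingale_of_supermartingale (T : sit -> R) (a c : R) :
  supermartingale phi T -> 0 <= a -> submartingale phi (fun s => c - a * T s).
Proof.
  intros HT Ha s r Hr. specialize (HT s r Hr). rewrite E_r_DeltaM in *. nra.
Qed.

End Submartingales.

Definition prod_process (g : sit -> bool -> R) : sit -> R :=
  forward_process 1 (fun s x m => m * g s x).

Lemma prod_process_snoc g s x : prod_process g (s ++ [x]) = prod_process g s * g s x.
Proof. apply forward_process_snoc. Qed.

Section ProductProcess.
Variable g : sit -> bool -> R.
Hypothesis g_bounds : forall s x, 0 <= g s x <= 2.

Lemma prod_process_bounds s : 0 <= prod_process g s <= 2 ^ length s.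
Proof.
  induction s as [|x s IH] using rev_ind; [cbn; lra|].
  rewrite prod_process_snoc, length_app, pow_add. simpl.
  pose proof (g_bounds s x). nra.
Qed.

Lemma prod_process_super phi :
  (forall s r, lo phi s <= r <= hi phi s -> r * g s true + (1 - r) * g s false <= 1) ->
  supermartingale phi (prod_process g).
Proof.
  intros Hg s r Hr. rewrite E_r_DeltaM, !prod_process_snoc.
  pose proof (prod_process_bounds s). specialize (Hg s r Hr). nra.
Qed.

Lemma prod_process_ge_exp_rsum (h : nat -> R) w :
  (forall k, exp (h k) <= g (prefix w k) (w k)) ->
  forall n, exp (rsum h n) <= prod_process g (prefix w n).
Proof.
  intros Hh n. induction n as [|n IH]; [cbn; rewrite exp_0; lra|].
  cbn [rsum]. rewrite exp_plus, prefix_S, prod_process_snoc.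
  apply Rmult_le_compat; [left; apply exp_pos | left; apply exp_pos | exact IH | apply Hh].
Qed.

End ProductProcess.

Definition stopped (T : sit -> R) (K : R) : sit -> R :=
  forward_process (T []) (fun s x m => if Rle_dec K m then m else T (s ++ [x])).

Lemma stopped_snoc T K s x :
  stopped T K (s ++ [x]) = if Rle_dec K (stopped T K s) then stopped T K s else T (s ++ [x]).
Proof. apply forward_process_snoc. Qed.

Lemma stopped_cases T K s : stopped T K s = T s \/ K <= stopped T K s.
Proof.
  induction s as [|x s IH] using rev_ind; [now left|].
  rewrite stopped_snoc. destruct Rle_dec; auto.
Qed.

Lemma stopped_nonneg T K : (forall s, 0 <= T s) -> forall s, 0 <= stopped T K s.
Proof.
  intros HT s. induction s as [|x s IH] using rev_ind; [apply HT|].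
  rewrite stopped_snoc. destruct Rle_dec; auto.
Qed.

Lemma stopped_super phi T K : supermartingale phi T -> supermartingale phi (stopped T K).
Proof.
  intros HT s r Hr. rewrite E_r_DeltaM, !stopped_snoc.
  destruct Rle_dec as [HK | HK]; [lra|].
  destruct (stopped_cases T K s) as [Hs | Hs]; [|lra].
  rewrite Hs. specialize (HT s r Hr). now rewrite E_r_DeltaM in HT.
Qed.

Lemma stopped_ge_after T K w n :
  K <= T (prefix w n) -> forall m, (n <= m)%nat -> K <= stopped T K (prefix w m).
Proof.
  intros HK m Hm. induction Hm as [|m Hm IH].
  - destruct (stopped_cases T K (prefix w n)) as [-> | ]; auto.
  - rewrite prefix_S, stopped_snoc. destruct Rle_dec; tauto.
Qed.

Definition weight (i : nat) : R := (/ 2) ^ S i.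

Lemma weight_pos i : 0 < weight i.
Proof. apply pow_lt. lra. Qed.

Lemma is_series_weight : is_series weight 1.
Proof.
  replace 1 with (/ 2 * / (1 - / 2)) by field.
  apply (is_series_ext (fun i => / 2 * (/ 2) ^ i)); [reflexivity|].
  apply (@is_series_scal_l R_AbsRing R_NormedModule), is_series_geom.
  rewrite Rabs_pos_eq; lra.
Qed.

Lemma ex_series_Rmult_l (c : R) (a : nat -> R) : ex_series a -> ex_series (fun i => c * a i).
Proof. apply (@ex_series_scal_l R_AbsRing R_NormedModule). Qed.

Lemma Series_nonneg (a : nat -> R) : (forall i, 0 <= a i) -> ex_series a -> 0 <= Series a.
Proof.
  intros Ha Hex. replace 0 with (Series (fun _ => 0 * 0)).
  - apply Series_le; [intros i; specialize (Ha i); lra | exact Hex].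
  - rewrite Series_scal_l. ring.
Qed.

Lemma Series_ge_term (a : nat -> R) i : (forall n, 0 <= a n) -> ex_series a -> a i <= Series a.
Proof.
  intros Ha Hex. rewrite (Series_incr_n a (S i)) by (lia || exact Hex). simpl Nat.pred.
  assert (Hsum : a i <= sum_f_R0 a i).
  { destruct i as [|i]; simpl; [lra|]. pose proof (cond_pos_sum a i Ha). lra. }
  assert (Htail : 0 <= Series (fun k => a (S i + k)%nat)).
  { apply Series_nonneg; [auto | now apply ex_series_incr_n]. }
  lra.
Qed.

Section Mixture.
Variables (T : nat -> sit -> R) (B : sit -> R).
Hypothesis T_bounds : forall i s, 0 <= T i s <= B s.

Definition mixture (s : sit) : R := Series (fun i => weight i * T i s).

Lemma ex_series_mixture s : ex_series (fun i => weight i * T i s).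
Proof.
  apply (@ex_series_le R_AbsRing R_CompleteNormedModule) with (b := fun i => B s * weight i).
  - intros i. change norm with Rabs. pose proof (T_bounds i s). pose proof (weight_pos i).
    rewrite Rabs_pos_eq by nra. nra.
  - apply ex_series_Rmult_l. eexists. apply is_series_weight.
Qed.

Lemma mixture_ge_component i s : weight i * T i s <= mixture s.
Proof.
  apply (Series_ge_term (fun i => weight i * T i s)); [|apply ex_series_mixture].
  intros n. pose proof (T_bounds n s). pose proof (weight_pos n). nra.
Qed.

Lemma mixture_nonneg s : 0 <= mixture s.
Proof.
  eapply Rle_trans; [|apply (mixture_ge_component O)].
  pose proof (T_bounds O s). pose proof (weight_pos O). nra.
Qed.

Lemma mixture_nil : (forall i, T i [] = 1) -> mixture [] = 1.
Proof.
  intros H1. unfold mixture. rewrite <- (is_series_unique _ _ is_series_weight).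
  apply Series_ext. intros i. rewrite H1. ring.
Qed.

Lemma mixture_super phi : (forall i, supermartingale phi (T i)) -> supermartingale phi mixture.
Proof.
  intros HT s r Hr. rewrite E_r_DeltaM.
  pose proof (lo_ge0 phi s). pose proof (hi_le1 phi s).
  set (a := fun i => weight i * T i (s ++ [true])).
  set (b := fun i => weight i * T i (s ++ [false])).
  assert (Hlin : r * mixture (s ++ [true]) + (1 - r) * mixture (s ++ [false])
                 = Series (fun i => r * a i + (1 - r) * b i)).
  { unfold mixture. rewrite Series_plus, !Series_scal_l; try reflexivity;
      apply ex_series_Rmult_l, ex_series_mixture. }
  assert (Hle : Series (fun i => r * a i + (1 - r) * b i) <= mixture s).
  { apply Series_le; [|apply ex_series_mixture].
    intros i. specialize (HT i s r Hr). rewrite E_r_DeltaM in HT.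
    pose proof (T_bounds i (s ++ [true])). pose proof (T_bounds i (s ++ [false])).
    assert (0 <= r * T i (s ++ [true]) + (1 - r) * T i (s ++ [false])) by nra.
    pose proof (weight_pos i). unfold a, b. split; nra. }
  lra.
Qed.

End Mixture.

Lemma exp_le_one_minus y q : y <= 1/2 -> y ^ 2 <= q -> exp (- y - 2 * q) <= 1 - y.
Proof.
  (* [(1 - y) (1 + z) >= 1] for [z = y + 2 q], and [exp z >= 1 + z]. *)
  intros Hy Hq.
  assert (Hinv : exp (- y - 2 * q) * exp (y + 2 * q) = 1).
  { rewrite <- exp_plus, <- exp_0. f_equal. ring. }
  pose proof (exp_ineq1_le (y + 2 * q)).
  pose proof (exp_pos (- y - 2 * q)).
  assert (Hprod : 1 <= (1 - y) * (1 + (y + 2 * q))) by nra.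
  assert (Hup : (1 - y) * (1 + (y + 2 * q)) <= (1 - y) * exp (y + 2 * q))
    by (apply Rmult_le_compat_l; lra).
  nra.
Qed.

Definition sgn (b : bool) : R := if b then 1 else -1.

Definition threshold (phi : forecasting_system) (b : bool) (s : sit) : R :=
  if b then lo phi s else hi phi s.

Definition deviation (phi : forecasting_system) (sel : selection_process) (b : bool)
    (s : sit) (x : bool) : R :=
  b2R (sel s) * (b2R x - threshold phi b s).

Definition selected_count (sel : selection_process) (w : path) (n : nat) : R :=
  rsum (fun k => b2R (sel (prefix w k))) n.

Definition selected_deviation (phi : forecasting_system) (sel : selection_process) (b : bool)
    (w : path) (n : nat) : R :=
  rsum (fun k => deviation phi sel b (prefix w k) (w k)) n.

(* In a selected situation the gambler sells the outcome at price [lo s] (b = true)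
   or buys it at price [hi s] (b = false), in quantity [dl] times his capital:
   a gamble with nonpositive expectation under every [r] in [phi s]. *)
Definition test_factor (phi : forecasting_system) (sel : selection_process) (dl : R) (b : bool)
    (s : sit) (x : bool) : R :=
  1 - sgn b * dl * deviation phi sel b s x.

Definition test (phi : forecasting_system) (sel : selection_process) (dl : R) (b : bool) :
  sit -> R := prod_process (test_factor phi sel dl b).

Section Tests.
Variables (phi : forecasting_system) (sel : selection_process) (dl : R) (b : bool).
Hypothesis dl_range : 0 < dl <= 1/3.

Lemma test_factor_bounds s x : 0 <= test_factor phi sel dl b s x <= 2.
Proof.
  unfold test_factor, deviation, sgn, threshold.
  pose proof (lo_ge0 phi s). pose proof (lo_le_hi phi s). pose proof (hi_le1 phi s).
  destruct b, (sel s), x; simpl; split; nra.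
Qed.

Lemma test_bounds s : 0 <= test phi sel dl b s <= 2 ^ length s.
Proof. apply prod_process_bounds, test_factor_bounds. Qed.

Lemma test_super : supermartingale phi (test phi sel dl b).
Proof.
  apply prod_process_super; [apply test_factor_bounds|].
  intros s r Hr. unfold test_factor, deviation, sgn, threshold.
  destruct b, (sel s); simpl; nra.
Qed.

Lemma test_factor_ge_exp s x :
  exp (- sgn b * dl * deviation phi sel b s x - 2 * dl ^ 2 * b2R (sel s))
  <= test_factor phi sel dl b s x.
Proof.
  pose proof (lo_ge0 phi s). pose proof (lo_le_hi phi s). pose proof (hi_le1 phi s).
  assert (Hy : sgn b * dl * deviation phi sel b s x <= 1/2).
  { unfold deviation, sgn, threshold. destruct b, (sel s), x; simpl; nra. }
  assert (Hq : (sgn b * dl * deviation phi sel b s x) ^ 2 <= dl ^ 2 * b2R (sel s)).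
  { assert (Hd : (b2R x - threshold phi b s) ^ 2 <= 1).
    { unfold threshold. destruct b, x; simpl; nra. }
    assert (Hdl : dl ^ 2 * (b2R x - threshold phi b s) ^ 2 <= dl ^ 2 * 1)
      by (apply Rmult_le_compat_l; nra).
    unfold deviation, sgn. destruct b, (sel s); simpl in *; nra. }
  unfold test_factor.
  replace (- sgn b * dl * deviation phi sel b s x - 2 * dl ^ 2 * b2R (sel s))
    with (- (sgn b * dl * deviation phi sel b s x) - 2 * (dl ^ 2 * b2R (sel s))) by ring.
  now apply exp_le_one_minus.
Qed.

Lemma test_ge_exp w n :
  exp (- sgn b * dl * selected_deviation phi sel b w n - 2 * dl ^ 2 * selected_count sel w n)
  <= test phi sel dl b (prefix w n).
Proof.
  assert (Hexponent :
    - sgn b * dl * selected_deviation phi sel b w n - 2 * dl ^ 2 * selected_count sel w n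
    = rsum (fun k => - sgn b * dl * deviation phi sel b (prefix w k) (w k)
                     - 2 * dl ^ 2 * b2R (sel (prefix w k))) n).
  { unfold selected_deviation, selected_count.
    induction n as [|n IH]; cbn [rsum]; [ring | rewrite <- IH; ring]. }
  rewrite Hexponent. apply prod_process_ge_exp_rsum. intros k. apply test_factor_ge_exp.
Qed.

Lemma test_unbounded w eta :
  3 * dl <= eta ->
  is_lim_seq (selected_count sel w) p_infty ->
  (forall N, exists n, (N <= n)%nat /\
     sgn b * (selected_deviation phi sel b w n / selected_count sel w n) < - eta) ->
  forall K, exists n, K <= test phi sel dl b (prefix w n).
Proof.
  intros Heta Hlim Hfreq K.
  apply is_lim_seq_spec in Hlim. destruct (Hlim (Rmax 1 (K / dl ^ 2))) as [N HN].
  destruct (Hfreq N) as [n [Hn Hratio]]. specialize (HN n Hn).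
  exists n. eapply Rle_trans; [|apply test_ge_exp].
  set (C := selected_count sel w n) in *. set (D := selected_deviation phi sel b w n) in *.
  pose proof (Rmax_l 1 (K / dl ^ 2)). pose proof (Rmax_r 1 (K / dl ^ 2)).
  assert (HD : sgn b * D < - eta * C).
  { replace (sgn b * D) with (sgn b * (D / C) * C) by (field; lra). nra. }
  assert (HK : K <= dl ^ 2 * C).
  { replace K with (dl ^ 2 * (K / dl ^ 2)) by (field; lra). nra. }
  assert (dl * (sgn b * D) <= dl * (- eta * C)) by (apply Rmult_le_compat_l; lra).
  assert (3 * dl * (dl * C) <= eta * (dl * C)) by (apply Rmult_le_compat_r; nra).
  pose proof (exp_ineq1_le (- sgn b * dl * D - 2 * dl ^ 2 * C)).
  nra.
Qed.

End Tests.

Definition stake (m : nat) : R := / INR (m + 3).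

Lemma stake_range m : 0 < stake m <= 1/3.
Proof.
  unfold stake. rewrite plus_INR. pose proof (pos_INR m). simpl.
  split; [apply Rinv_0_lt_compat; lra|].
  replace (1/3) with (/3) by field. apply Rinv_le_contravar; lra.
Qed.

Lemma stake_small eta : 0 < eta -> exists m, 3 * stake m <= eta.
Proof.
  intros Heta. destruct (INR_unbounded (3 / eta)) as [m Hm]. exists m.
  pose proof (stake_range m). unfold stake in *. rewrite plus_INR in *. simpl in *.
  assert (H3 : 3 < eta * INR m).
  { replace 3 with (eta * (3 / eta)) by (field; lra). apply Rmult_lt_compat_l; lra. }
  pose proof (pos_INR m).
  replace (3 * / (INR m + (1 + 1 + 1))) with (3 / (INR m + 3)) by (field; lra).
  apply Rle_div_l; nra.
Qed.

Definition selection (e : nat -> option selection_process) (n : nat) : selection_process :=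
  match e n with Some sel => sel | None => fun _ => false end.

Definition test_index (i : nat) : nat * nat * bool :=
  let (n, j) := of_nat i in let (m, c) := of_nat j in (n, m, Nat.eqb c 0).

Lemma test_index_surj n m b : exists i, test_index i = (n, m, b).
Proof.
  exists (to_nat (n, to_nat (m, if b then 0%nat else 1%nat))).
  unfold test_index. rewrite !cancel_of_to. now destruct b.
Qed.

Definition test_family (phi : forecasting_system) (e : nat -> option selection_process)
    (i : nat) : sit -> R :=
  let '(n, m, b) := test_index i in test phi (selection e n) (stake m) b.

Definition capital (phi : forecasting_system) (e : nat -> option selection_process) :
  sit -> R := mixture (test_family phi e).

Section Capital.
Variables (phi : forecasting_system) (e : nat -> option selection_process).

Lemma test_family_bounds i s : 0 <= test_family phi e i s <= 2 ^ length s.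
Proof.
  unfold test_family. destruct (test_index i) as [[n m] b]. apply test_bounds, stake_range.
Qed.

Lemma capital_super : supermartingale phi (capital phi e).
Proof.
  apply (mixture_super _ _ test_family_bounds).
  intros i. unfold test_family. destruct (test_index i) as [[n m] b]. apply test_super, stake_range.
Qed.

Lemma capital_nonneg s : 0 <= capital phi e s.
Proof. apply (mixture_nonneg _ _ test_family_bounds). Qed.

Lemma capital_nil : capital phi e [] = 1.
Proof.
  apply mixture_nil.
  intros i. unfold test_family. now destruct (test_index i) as [[n m] b].
Qed.

Lemma capital_ge_test n m b :
  exists c, 0 < c /\ forall s, c * test phi (selection e n) (stake m) b s <= capital phi e s.
Proof.
  destruct (test_index_surj n m b) as [i Hi].
  exists (weight i). split; [apply weight_pos|]. intros s.
  pose proof (mixture_ge_component _ _ test_family_bounds i s) as H.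
  unfold test_family in H. now rewrite Hi in H.
Qed.

End Capital.

Lemma liminf_neg_frequently (u : nat -> R) :
  ~ Rbar_le 0 (LimInf_seq u) ->
  exists eta, 0 < eta /\ forall N, exists n, (N <= n)%nat /\ u n < - eta.
Proof.
  destruct (ex_LimInf_seq u) as [l Hl]. rewrite (is_LimInf_seq_unique _ _ Hl).
  destruct l as [l| |]; simpl in *; intros Hneg; [|tauto|].
  - apply Rnot_le_lt in Hneg.
    exists (- l / 2). split; [lra|]. intros N.
    destruct (proj1 (Hl (mkposreal (- l / 2) ltac:(lra))) N) as [n [Hn Hu]].
    exists n. simpl in Hu. split; [exact Hn | lra].
  - exists 1. split; [lra|]. exact (Hl (-1)).
Qed.

Lemma limsup_pos_frequently (u : nat -> R) :
  ~ Rbar_le (LimSup_seq u) 0 ->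
  exists eta, 0 < eta /\ forall N, exists n, (N <= n)%nat /\ eta < u n.
Proof.
  intros Hpos.
  destruct (liminf_neg_frequently (fun n => - u n)) as [eta [Heta Hfreq]].
  - rewrite LimInf_seq_opp. intros Hle. apply Hpos.
    apply Rbar_opp_le. simpl. now rewrite Ropp_0.
  - exists eta. split; [exact Heta|]. intros N.
    destruct (Hfreq N) as [n [Hn Hu]]. exists n. split; [exact Hn | lra].
Qed.

Lemma not_S_random_deviation P phi w :
  ~ S_random P phi w ->
  exists sel b eta, P sel /\ is_lim_seq (selected_count sel w) p_infty /\ 0 < eta /\
    forall N, exists n, (N <= n)%nat /\
      sgn b * (selected_deviation phi sel b w n / selected_count sel w n) < - eta.
Proof.
  intros Hnr. apply NNPP. intros Hdev. apply Hnr. intros sel HS Hlim.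
  split; apply NNPP; intros Hviol.
  - destruct (liminf_neg_frequently _ Hviol) as [eta [Heta Hfreq]].
    apply Hdev. exists sel, true, eta. repeat split; auto.
    intros N. destruct (Hfreq N) as [n [Hn Hu]]. exists n. split; [exact Hn|].
    cbv beta iota delta [sgn selected_deviation selected_count deviation threshold]. lra.
  - destruct (limsup_pos_frequently _ Hviol) as [eta [Heta Hfreq]].
    apply Hdev. exists sel, false, eta. repeat split; auto.
    intros N. destruct (Hfreq N) as [n [Hn Hu]]. exists n. split; [exact Hn|].
    cbv beta iota delta [sgn selected_deviation selected_count deviation threshold]. lra.
Qed.

Lemma capital_unbounded P phi (e : nat -> option selection_process) :
  (forall sel, P sel -> exists n, e n = Some sel) ->
  forall w, ~ S_random P phi w -> forall K, exists n, K <= capital phi e (prefix w n).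
Proof.
  intros He w Hnr K.
  destruct (not_S_random_deviation P phi w Hnr) as [sel [b [eta [HP [Hlim [Heta Hfreq]]]]]].
  destruct (He sel HP) as [n0 Hn0].
  assert (Hsel : selection e n0 = sel) by (unfold selection; now rewrite Hn0).
  destruct (stake_small eta Heta) as [m Hm].
  destruct (capital_ge_test phi e n0 m b) as [c [Hc Hcap]]. rewrite Hsel in Hcap.
  destruct (test_unbounded phi sel (stake m) b (stake_range m) w eta Hm Hlim Hfreq (K / c))
    as [n Hn].
  exists n. eapply Rle_trans; [|apply Hcap].
  replace K with (c * (K / c)) by (field; lra).
  apply Rmult_le_compat_l; lra.
Qed.

Lemma S_random_approx P phi (e : nat -> option selection_process) :
  (forall sel, P sel -> exists n, e n = Some sel) ->
  forall eps, 0 < eps -> exists M : sit -> R,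
    submartingale phi M /\
    (forall w, Rbar_le (LimSup_seq (fun n => M (prefix w n))) (indicator (S_random P phi) w)) /\
    M [] = 1 - eps.
Proof.
  intros He eps Heps. set (St := stopped (capital phi e) (/ eps)).
  exists (fun s => 1 - eps * St s). split; [|split].
  - apply submartingale_of_supermartingale; [apply stopped_super, capital_super | lra].
  - intros w. unfold indicator. destruct excluded_middle_informative as [Hr | Hnr].
    + rewrite <- LimSup_seq_const. apply LimSup_le. exists O. intros n _.
      assert (0 <= St (prefix w n)) by apply stopped_nonneg, capital_nonneg. nra.
    + destruct (capital_unbounded P phi e He w Hnr (/ eps)) as [n Hn].
      rewrite <- LimSup_seq_const. apply LimSup_le. exists n. intros m Hm.
      pose proof (stopped_ge_after _ _ w n Hn m Hm) as Hstop. fold St in Hstop.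
      apply (Rmult_le_compat_l eps) in Hstop; [|lra].
      rewrite Rinv_r in Hstop by lra. lra.
  - unfold St, stopped. rewrite forward_process_nil, capital_nil. ring.
Qed.

Lemma lower_exp_le phi (f : path -> R) (c : R) :
  (forall w, f w <= c) -> Rbar_le (lower_exp phi f) c.
Proof.
  intros Hf. apply (proj2 (Lub_Rbar_correct _)).
  intros x [M [HM [HL ->]]]. simpl. apply (submartingale_le_limsup phi M c HM).
  intros w. eapply Rbar_le_trans; [apply HL | apply Hf].
Qed.

Lemma lower_exp_ge phi (f : path -> R) M :
  submartingale phi M ->
  (forall w, Rbar_le (LimSup_seq (fun n => M (prefix w n))) (f w)) ->
  Rbar_le (M []) (lower_exp phi f).
Proof.
  intros HM HL. apply (proj1 (Lub_Rbar_correct _)).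
  exists M. split; [exact HM | split; [exact HL | reflexivity]].
Qed.

Lemma almost_sure_of_approx phi A :
  (forall eps, 0 < eps -> exists M : sit -> R,
    submartingale phi M /\
    (forall w, Rbar_le (LimSup_seq (fun n => M (prefix w n))) (indicator A w)) /\
    M [] = 1 - eps) ->
  almost_sure phi A.
Proof.
  intros Happrox. apply Rbar_le_antisym.
  - apply lower_exp_le. intros w. unfold indicator. destruct excluded_middle_informative; lra.
  - assert (Hge : forall eps, 0 < eps -> Rbar_le (1 - eps) (lower_exp phi (indicator A))).
    { intros eps Heps. destruct (Happrox eps Heps) as [M [HM [HL <-]]].
      now apply lower_exp_ge. }
    destruct (lower_exp phi (indicator A)) as [l| |]; simpl in *; auto.
    + apply Rle_plus_epsilon. intros eps Heps. specialize (Hge eps Heps). lra.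
    + apply (Hge 1). lra.
Qed.

Theorem proposition24 (phi : forecasting_system)
    (P : selection_process -> Prop) (HP : countable_set P) :
  almost_sure phi (S_random P phi).
Proof.
  destruct HP as [e He].
  apply almost_sure_of_approx.
  exact (S_random_approx P phi e He).
Qed.
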